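(* Let $\mathbf{Y}\sim\mathcal{SUT}_{d,m}(\boldsymbol{\xi},\boldsymbol{\Omega},\boldsymbol{\Delta},\boldsymbol{\tau},\bar{\boldsymbol{\Gamma}},\nu)$ and let $Q_{\mathbf{Y}}=(\mathbf{Y}-\boldsymbol{\xi})^\top\boldsymbol{\Omega}^{-1}(\mathbf{Y}-\boldsymbol{\xi})$. Let $\boldsymbol{\Lambda}=\boldsymbol{\Delta}^\top\bar{\boldsymbol{\Omega}}^{-1}$ and let $(\mathbf{U}_0^{*\top},\mathbf{U}_1^\top)^\top\sim\mathcal{T}_{m+d}\left(\mathbf{0},\begin{pmatrix}\bar{\boldsymbol{\Gamma}}-\boldsymbol{\Delta}^\top\bar{\boldsymbol{\Omega}}^{-1}\boldsymbol{\Delta}&\mathbf{0}\\ \mathbf{0}&\bar{\boldsymbol{\Omega}}\end{pmatrix},\nu\right)$ with $\mathbf{U}_0^*\in\mathbb{R}^m$, $\mathbf{U}_1\in\mathbb{R}^d$, and let $Q_{\mathbf{U}_1}=\mathbf{U}_1^\top\bar{\boldsymbol{\Omega}}^{-1}\mathbf{U}_1$ with density $f_{Q_{\mathbf{U}_1}}$. Then $Q_{\mathbf{Y}}$ has density $$f_{Q_{\mathbf{Y}}}(v)=f_{Q_{\mathbf{U}_1}}(v)\,\frac{\mathrm{P}(\mathbf{U}_0^*<\boldsymbol{\Lambda}\mathbf{U}_1+\boldsymbol{\tau}\mid Q_{\mathbf{U}_1}=v)}{\mathrm{P}(\mathbf{U}_0^*<\boldsymbol{\Lambda}\mathbf{U}_1+\boldsymbol{\tau})},\qquad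 v>0,$$ where inequalities between vectors are componentwise.
   Context: Notation: $\mathcal{T}_k(\boldsymbol{\mu},\boldsymbol{\Sigma},\nu)$ is the $k$-dimensional Student $t$ distribution with location $\boldsymbol{\mu}$, dispersion $\boldsymbol{\Sigma}$ and $\nu>0$ degrees of freedom. Parameters: $\boldsymbol{\xi}\in\mathbb{R}^d$; $\boldsymbol{\Omega}$ a $d\times d$ positive definite matrix, $\boldsymbol{\omega}=\mathrm{diag}(\boldsymbol{\Omega})^{1/2}$, $\bar{\boldsymbol{\Omega}}=\boldsymbol{\omega}^{-1}\boldsymbol{\Omega}\boldsymbol{\omega}^{-1}$; $\boldsymbol{\Delta}$ a $d\times m$ matrix; $\bar{\boldsymbol{\Gamma}}$ an $m\times m$ correlation matrix; $\boldsymbol{\tau}\in\mathbb{R}^m$; $\nu>0$; with $\bar{\boldsymbol{\Omega}}^*=\begin{pmatrix}\bar{\boldsymbol{\Gamma}}&\boldsymbol{\Delta}^\top\\ \boldsymbol{\Delta}&\bar{\boldsymbol{\Omega}}\end{pmatrix}$ positive definite. Definition: if $(\mathbf{U}_0^\top,\mathbf{U}_1^\top)^\top\sim\mathcal{T}_{m+d}(\mathbf{0},\bar{\boldsymbol{\Omega}}^*,\nu)$ ($\mathbf{U}_0\in\mathbb{R}^m$, $\mathbf{U}_1\in\mathbb{R}^d$) and $\mathbf{Z}$ has the conditional distribution of $\mathbf{U}_1$ given $\mathbf{U}_0+\boldsymbol{\tau}>\mathbf{0}$ (componentwise), then $\mathbf{Y}=\boldsymbol{\xi}+\boldsymbol{\omega}\mathbf{Z}$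 has distribution $\mathcal{SUT}_{d,m}(\boldsymbol{\xi},\boldsymbol{\Omega},\boldsymbol{\Delta},\boldsymbol{\tau},\bar{\boldsymbol{\Gamma}},\nu)$. *)

From HB Require Import structures.
From mathcomp Require Import all_boot all_order all_algebra.
From mathcomp Require Import all_classical all_reals all_analysis.

Set Implicit Arguments.
Unset Strict Implicit.
Unset Printing Implicit Defensive.

Import Order.TTheory GRing.Theory Num.Theory.
Import numFieldNormedType.Exports.

Local Open Scope classical_set_scope.
Local Open Scope ring_scope.

Section Defs.
Variable R : realType.

Definition posdef (k : nat) (A : 'M[R]_k) : Prop :=
  A^T = A /\ forall x : 'cV[R]_k, x != 0 -> 0 < (x^T *m A *m x) 0 0.

(** Borel sigma-algebra on R^k (column vectors): generated by the
    coordinate maps, i.e. the product Borel sigma-algebra. *)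
Definition mxBorel (k : nat) : set (set 'cV[R]_k) :=
  <<s [set A | exists (i : 'I_k) (B : set R),
         measurable B /\ A = (fun x : 'cV[R]_k => x i 0) @^-1` B] >>.

(** Lebesgue integral over R^k of a nonnegative function, as an iterated
    integral over the coordinates (Tonelli). *)
Fixpoint iint (k : nat) : ('cV[R]_k -> \bar R) -> \bar R :=
  match k return ('cV[R]_k -> \bar R) -> \bar R with
  | 0 => fun f => f 0
  | k'.+1 => fun f =>
      (\int[@lebesgue_measure R]_(x in [set: R])
         iint (fun v : 'cV[R]_k' =>
                 f (col_mx (const_mx x : 'cV[R]_1) v : 'cV[R]_k'.+1)))%E
  end.

Definition Gamma (s : R) : R :=
  fine (\int[@lebesgue_measure R]_(t in `]0%R, +oo[%classic)
          (powR t (s - 1) * expR (- t))%:E)%E.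

Definition t_density (k : nat) (mu : 'cV[R]_k) (Sigma : 'M[R]_k) (nu : R)
    (x : 'cV[R]_k) : R :=
  Gamma ((nu + k%:R) / 2) /
    (Gamma (nu / 2) * powR (nu * pi) (k%:R / 2) * Num.sqrt (\det Sigma)) *
  powR (1 + ((x - mu)^T *m invmx Sigma *m (x - mu)) 0 0 / nu)
       (- ((nu + k%:R) / 2)).

Section RV.
Context {dT : measure_display} {T : measurableType dT}.
Variable P : probability T R.

Definition random_vector (k : nat) (X : T -> 'cV[R]_k) : Prop :=
  forall B, mxBorel B -> measurable (X @^-1` B).

Definition has_t_law (k : nat) (X : T -> 'cV[R]_k) (mu : 'cV[R]_k)
    (Sigma : 'M[R]_k) (nu : R) : Prop :=
  random_vector X /\
  forall B, mxBorel B ->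
    P (X @^-1` B) = iint (fun x => ((\1_B x : R) * t_density mu Sigma nu x)%:E).

Definition omega_mx (d : nat) (Omega : 'M[R]_d) : 'M[R]_d :=
  diag_mx (\row_i Num.sqrt (Omega i i)).
Definition Omega_bar (d : nat) (Omega : 'M[R]_d) : 'M[R]_d :=
  invmx (omega_mx Omega) *m Omega *m invmx (omega_mx Omega).
Definition Omega_star (d m : nat) (Omega : 'M[R]_d) (Delta : 'M[R]_(d, m))
    (Gamma_bar : 'M[R]_m) : 'M[R]_(m + d) :=
  block_mx Gamma_bar Delta^T Delta (Omega_bar Omega).

(** Y ~ SUT_{d,m}(xi, Omega, Delta, tau, Gamma_bar, nu):
    Y has the law of xi + omega Z, where Z is distributed as U1 given
    U0 + tau > 0, with (U0, U1) ~ T_{m+d}(0, Omega_star, nu). *)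
Definition has_SUT_law (d m : nat) (Y : T -> 'cV[R]_d) (xi : 'cV[R]_d)
    (Omega : 'M[R]_d) (Delta : 'M[R]_(d, m)) (tau : 'cV[R]_m)
    (Gamma_bar : 'M[R]_m) (nu : R) : Prop :=
  let f := t_density (0 : 'cV[R]_(m + d)) (Omega_star Omega Delta Gamma_bar) nu in
  let C := [set u : 'cV[R]_(m + d) | forall i, 0 < (usubmx u + tau) i 0] in
  random_vector Y /\
  forall B, mxBorel B ->
    P (Y @^-1` B) =
      (fine (iint (fun u => ((\1_(C `&`
                 [set u | xi + omega_mx Omega *m dsubmx u \in B]) u : R) * f u)%:E))
       / fine (iint (fun u => ((\1_C u : R) * f u)%:E)))%:E.

End RV.
End Defs.

(* The law of Y is that of xi + omega U1 given U0 + tau > 0, where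
   (U0, U1) ~ T(0, Omega_star, nu).  The shear M (u0, u1) = (Lambda u1 - u0, u1)
   is an involution with det M = +-1 and
   M Omega_star M^T = diag (Gamma_bar - Delta^T Omega_bar^-1 Delta, Omega_bar);
   as the t density depends on x only through x^T Sigma^-1 x, M carries the law
   of (U0, U1) to the law of W = (U0*, U1).  Under M the selection event becomes
   U0* < Lambda U1 + tau, and Q_Y = U1^T Omega_bar^-1 U1 because Y - xi = omega U1.
   Hence P(Q_Y in B) = P(U0* < Lambda U1 + tau, Q_U1 in B) / P(U0* < Lambda U1 + tau),
   and the numerator is the integral of g f_Q over B.  Restricting to v > 0 costs
   nothing: Q_U1 >= 0 has a density, so P(Q_U1 = 0) = 0.
   By Tonelli, invariance of the iterated Lebesgue integral under M reduces to
   invariance of Lebesgue measure under x |-> c - x in one coordinate. *)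

From HB Require Import structures.
From mathcomp Require Import all_boot all_order all_algebra.
From mathcomp Require Import all_classical all_reals all_analysis.
From mathcomp Require Import measurable_realfun.
From mathcomp Require Import ring lra.
Import Order.TTheory GRing.Theory Num.Theory.
Import numFieldNormedType.Exports.
Local Open Scope classical_set_scope.
Local Open Scope ring_scope.

Section borel_cV.
Context {R : realType}.

Definition coord_preimages k : set (set 'cV[R]_k) :=
  [set A | exists (i : 'I_k) (B : set R),
     measurable B /\ A = (fun x : 'cV[R]_k => x i 0) @^-1` B].

(* Its measurable sets are, by conversion, the [mxBorel] sets. *)
Definition borel_cV k := g_sigma_algebraType (coord_preimages k).

Lemma measurable_coord {k} (i : 'I_k) :
  measurable_fun setT (fun v : borel_cV k => v i 0).
Proof. by move=> _ B mB; rewrite setTI; apply: sub_sigma_algebra; exists i, B. Qed.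

Lemma measurable_fun_cV dX (X : measurableType dX) k (h : X -> borel_cV k) :
  (forall i, measurable_fun setT (fun x => h x i 0)) -> measurable_fun setT h.
Proof.
move=> hi; apply: (@measurability _ _ _ _ setT h (coord_preimages k)) => //.
by move=> _ [_ [i [B [mB ->]]] <-]; exact: hi.
Qed.

Lemma random_vector_measurable {dT} {T : measurableType dT} {k} {X : T -> borel_cV k} :
  random_vector X -> measurable_fun setT X.
Proof. by move=> rvX _ B mB; rewrite setTI; exact: rvX. Qed.

Lemma measurable_col_mx m d : measurable_fun setT
  (fun p : borel_cV m * borel_cV d => (col_mx p.1 p.2 : borel_cV (m + d))).
Proof.
apply: measurable_fun_cV => i /=; under eq_fun do rewrite /col_mx mxE.
case: (fintype.split i) => j.
  exact: measurableT_comp (measurable_coord j) measurable_fst.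
exact: measurableT_comp (measurable_coord j) measurable_snd.
Qed.

Lemma measurable_const_cV1 :
  measurable_fun setT (fun x : R => (const_mx x : borel_cV 1)).
Proof.
by apply: measurable_fun_cV => i; under eq_fun do rewrite mxE; exact: measurable_id.
Qed.

Lemma measurable_cons_cV k : measurable_fun setT
  (fun p : R * borel_cV k => (col_mx (const_mx p.1 : 'cV[R]_1) p.2 : borel_cV k.+1)).
Proof.
exact: measurableT_comp (measurable_col_mx 1 k)
  (measurable_fun_pair (measurableT_comp measurable_const_cV1 measurable_fst)
     measurable_snd).
Qed.

Lemma measurable_cons_cst k (y : R) : measurable_fun setT
  (fun v : borel_cV k => (col_mx (const_mx y : 'cV[R]_1) v : borel_cV k.+1)).
Proof.
have my : measurable_fun setT (fun v : borel_cV k => (y, v)).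
  by apply: measurable_fun_pair; [exact: measurable_cst | exact: measurable_id].
exact: measurableT_comp (measurable_cons_cV k) my.
Qed.

Section measurable_matrix_ops.
Context {dX} {X : measurableType dX} {k : nat}.
Implicit Types f g : X -> borel_cV k.

Lemma measurable_mulmx {k'} (A : 'M[R]_(k', k)) {f} :
  measurable_fun setT f -> measurable_fun setT (fun x => (A *m f x : borel_cV k')).
Proof.
move=> mf; apply: measurable_fun_cV => i; under eq_fun do rewrite mxE.
apply: measurable_sum => j; apply: measurable_funM; first exact: measurable_cst.
exact: measurableT_comp (measurable_coord j) mf.
Qed.

Lemma measurable_addmx {f g} : measurable_fun setT f -> measurable_fun setT g ->
  measurable_fun setT (fun x => (f x + g x : borel_cV k)).
Proof.
move=> mf mg; apply: measurable_fun_cV => i; under eq_fun do rewrite mxE.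
by apply: measurable_funD; exact: measurableT_comp (measurable_coord i) _.
Qed.

Lemma measurable_submx {f g} : measurable_fun setT f -> measurable_fun setT g ->
  measurable_fun setT (fun x => (f x - g x : borel_cV k)).
Proof.
move=> mf mg; apply: measurable_fun_cV => i; under eq_fun do rewrite !mxE.
by apply: measurable_funB; exact: measurableT_comp (measurable_coord i) _.
Qed.

Lemma measurable_quad (M : 'M[R]_k) {f} : measurable_fun setT f ->
  measurable_fun setT (fun x => ((f x)^T *m M *m f x) 0 0).
Proof.
move=> mf.
have quadE (v : 'cV[R]_k) : (v^T *m M *m v) 0 0 = \sum_j (M^T *m v) j 0 * v j 0.
  rewrite mxE; apply: eq_bigr => j _; congr (_ * _); rewrite !mxE.
  by apply: eq_bigr => i _; rewrite !mxE mulrC.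
under eq_fun do rewrite quadE.
apply: measurable_sum => j; apply: measurable_funM.
  exact: measurableT_comp (measurable_coord j) (measurable_mulmx M^T mf).
exact: measurableT_comp (measurable_coord j) mf.
Qed.

End measurable_matrix_ops.

Lemma measurable_usubmx {m d} :
  measurable_fun setT (fun w : borel_cV (m + d) => (usubmx w : borel_cV m)).
Proof.
by apply: measurable_fun_cV => i; under eq_fun do rewrite mxE; exact: measurable_coord.
Qed.

Lemma measurable_dsubmx {m d} :
  measurable_fun setT (fun w : borel_cV (m + d) => (dsubmx w : borel_cV d)).
Proof.
by apply: measurable_fun_cV => i; under eq_fun do rewrite mxE; exact: measurable_coord.
Qed.

Lemma measurable_t_density k (mu : 'cV[R]_k) (S : 'M[R]_k) (nu : R) :
  measurable_fun setT (fun x : borel_cV k => t_density mu S nu x).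
Proof.
apply: measurable_funM; first exact: measurable_cst.
apply: measurableT_comp (measurable_powR _) _.
apply: measurable_funD; first exact: measurable_cst.
apply: measurable_funM; last exact: measurable_cst.
exact/measurable_quad/measurable_submx/measurable_cst/measurable_id.
Qed.

Lemma Gamma_ge0 (s : R) : 0 <= Gamma s.
Proof.
apply: fine_ge0; apply: integral_ge0 => t _.
by rewrite lee_fin mulr_ge0 ?powR_ge0 ?expR_ge0.
Qed.

Lemma t_density_ge0 k (mu : 'cV[R]_k) (S : 'M[R]_k) (nu : R) x :
  0 <= nu -> 0 <= t_density mu S nu x.
Proof.
move=> nu0; apply: mulr_ge0; last exact: powR_ge0.
by rewrite divr_ge0 ?Gamma_ge0 // !mulr_ge0 ?Gamma_ge0 ?powR_ge0 ?sqrtr_ge0.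
Qed.

End borel_cV.

Section iterated_integral.
Context {R : realType}.
Local Notation leb := (@lebesgue_measure R).
Local Notation borel_cV := (@borel_cV R).

Lemma iint_ge0 k (f : 'cV[R]_k -> \bar R) :
  (forall x, (0 <= f x)%E) -> (0 <= iint f)%E.
Proof.
elim: k f => [|k IH] f f0 /=; first exact: f0.
by apply: integral_ge0 => x _; exact: IH.
Qed.

Lemma measurable_cons_param {dX} {X : measurableType dX} {k}
    {phi : X * borel_cV k.+1 -> \bar R} :
  measurable_fun setT phi ->
  measurable_fun setT (fun q : (X * R) * borel_cV k =>
     phi (q.1.1, col_mx (const_mx q.1.2 : 'cV[R]_1) q.2)).
Proof.
move=> mphi; apply: (measurableT_comp mphi).
apply: measurable_fun_pair.
  exact: measurableT_comp measurable_fst measurable_fst.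
have mg : measurable_fun setT (fun q : (X * R) * borel_cV k => (q.1.2, q.2)).
  apply: measurable_fun_pair; last exact: measurable_snd.
  exact: measurableT_comp measurable_snd measurable_fst.
exact: measurableT_comp (measurable_cons_cV k) mg.
Qed.

Lemma measurable_iint {k dX} {X : measurableType dX} (phi : X * borel_cV k -> \bar R) :
  measurable_fun setT phi -> (forall z, (0 <= phi z)%E) ->
  measurable_fun setT (fun x => iint (fun v => phi (x, v))).
Proof.
elim: k dX X phi => [|k IH] dX X phi mphi phi0 /=.
  have m0 : measurable_fun setT (fun x : X => (x, 0 : borel_cV 0)).
    by apply: measurable_fun_pair; [exact: measurable_id | exact: measurable_cst].
  exact: measurableT_comp mphi m0.
pose psi (p : X * R) :=
  iint (fun v : 'cV[R]_k => phi (p.1, col_mx (const_mx p.2 : 'cV[R]_1) v)).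
have mpsi : measurable_fun setT psi.
  exact: IH _ _ _ (measurable_cons_param mphi) (fun _ => phi0 _).
have psi0 p : (0 <= psi p)%E by apply: iint_ge0 => v; exact: phi0.
exact: (measurable_fun_fubini_tonelli_F (m2 := leb) psi mpsi psi0).
Qed.

Lemma integral_iint_swap {k} (psi : R * borel_cV k -> \bar R) :
  measurable_fun setT psi -> (forall z, (0 <= psi z)%E) ->
  (\int[leb]_x iint (fun b => psi (x, b)))%E =
  iint (fun b => \int[leb]_x psi (x, b))%E.
Proof.
elim: k psi => [//|k IH] psi mpsi psi0 /=.
pose F (p : R * R) := iint (fun b : 'cV[R]_k =>
  psi (p.1, col_mx (const_mx p.2 : 'cV[R]_1) b)).
have mF : measurable_fun setT F.
  exact: measurable_iint (measurable_cons_param mpsi) (fun _ => psi0 _).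
have F0 p : (0 <= F p)%E by apply: iint_ge0 => v; exact: psi0.
have := @fubini_tonelli _ _ (measurableTypeR R) (measurableTypeR R) R leb leb F mF F0.
rewrite /F /= => ->; apply: eq_integral => y _.
apply: (IH (fun p : R * borel_cV k => psi (p.1, col_mx (const_mx y : 'cV[R]_1) p.2))).
  apply: (measurableT_comp mpsi).
  apply: measurable_fun_pair; first exact: measurable_fst.
  exact: measurableT_comp (measurable_cons_cst k y) measurable_snd.
by move=> z; exact: psi0.
Qed.

Lemma iint_swap {m d} (phi : borel_cV m * borel_cV d -> \bar R) :
  measurable_fun setT phi -> (forall z, (0 <= phi z)%E) ->
  iint (fun a : 'cV[R]_m => iint (fun b : 'cV[R]_d => phi (a, b))) =
  iint (fun b : 'cV[R]_d => iint (fun a : 'cV[R]_m => phi (a, b))).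
Proof.
elim: m phi => [//|m IH] phi mphi phi0 /=.
have mcons (x : R) : measurable_fun setT
    (fun p : borel_cV m * borel_cV d => phi (col_mx (const_mx x : 'cV[R]_1) p.1, p.2)).
  apply: (measurableT_comp mphi); apply: measurable_fun_pair; last exact: measurable_snd.
  exact: measurableT_comp (measurable_cons_cst m x) measurable_fst.
under eq_integral do rewrite (IH _ (mcons _)) //.
apply: (integral_iint_swap (fun p : R * borel_cV d =>
    iint (fun a : 'cV[R]_m => phi (col_mx (const_mx p.1 : 'cV[R]_1) a, p.2))))
  => [|z]; last exact: iint_ge0.
apply: (measurable_iint (fun q : (R * borel_cV d) * borel_cV m =>
  phi (col_mx (const_mx q.1.1 : 'cV[R]_1) q.2, q.1.2))) => //.
apply: (measurableT_comp mphi); apply: measurable_fun_pair; last first.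
  exact: measurableT_comp measurable_snd measurable_fst.
have mg : measurable_fun setT (fun q : (R * borel_cV d) * borel_cV m => (q.1.1, q.2)).
  apply: measurable_fun_pair; last exact: measurable_snd.
  exact: measurableT_comp measurable_fst measurable_fst.
exact: measurableT_comp (measurable_cons_cV m) mg.
Qed.

Lemma iint_col_mx {m d} (h : 'cV[R]_(m + d) -> \bar R) :
  iint h = iint (fun a : 'cV[R]_m => iint (fun b : 'cV[R]_d => h (col_mx a b))).
Proof.
elim: m h => [|m IH] h /=.
  congr iint; apply/funext => b; congr h; apply/matrixP => i j.
  by rewrite /col_mx mxE; case: splitP => [[]//|k /= ik]; congr (b _ _); apply: val_inj.
apply: eq_integral => x _; rewrite (IH (fun v => h (col_mx (const_mx x : 'cV[R]_1) v))).
congr iint; apply/funext => a; congr iint; apply/funext => b.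
by rewrite col_mxA castmx_id.
Qed.

Lemma integral_reflect (G : R -> \bar R) (c : R) :
  measurable_fun setT G -> (forall x, (0 <= G x)%E) ->
  (\int[leb]_x G (c - x)%R = \int[leb]_x G x)%E.
Proof.
move=> mG G0.
pose phi : measurableTypeR R -> measurableTypeR R := fun x => c - x.
have mphi : measurable_fun setT phi by exact: measurable_funB.
have leb_phi A : measurable A -> leb A = pushforward leb phi A.
  move=> mA; apply: (@lebesgue_measure_unique R (pushforward leb phi)) => //.
  move=> _ [[a b] _ <-] /=.
  change (leb `]a, b]%classic = leb (phi @^-1` `]a, b]%classic)).
  have -> : phi @^-1` `]a, b]%classic = `[c - b, c - a[%classic.
    by apply/seteqP; split => x /=; rewrite !in_itv /= => /andP[h1 h2];
      apply/andP; split; rewrite /phi in h1 h2 *; lra.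
  rewrite !lebesgue_measure_itv /= !lte_fin ltrD2l ltrN2.
  by case: ifP => // _; rewrite -EFinB; congr EFin; ring.
rewrite [RHS](eq_measure_integral (pushforward leb phi)) => [|A mA _]; last first.
  exact: leb_phi.
by rewrite ge0_integral_pushforward.
Qed.

Lemma iint_reflect {k} (phi : borel_cV k -> \bar R) (c : 'cV[R]_k) :
  measurable_fun setT phi -> (forall z, (0 <= phi z)%E) ->
  iint (fun a : 'cV[R]_k => phi (c - a)) = iint phi.
Proof.
elim: k phi c => [|k IH] phi c mphi phi0; first by rewrite /= (flatmx0 c) subr0.
have consB (x : R) (v : 'cV[R]_k) : c - col_mx (const_mx x : 'cV[R]_1) v =
    col_mx (const_mx (c 0 0 - x) : 'cV[R]_1) (dsubmx (c : 'cV[R]_(1 + k)) - v).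
  apply/matrixP => i j; rewrite !ord1 !mxE.
  case: (@splitP 1 k i) => l il; rewrite !mxE.
    by rewrite (ord1 l) /= in il; congr (c _ _ - x); exact: val_inj.
  by congr (c _ _ - _); apply: val_inj; rewrite /= il.
pose G (y : R) := iint (fun v : 'cV[R]_k => phi (col_mx (const_mx y : 'cV[R]_1) v)).
rewrite /=; transitivity (\int[leb]_x G (c 0 0 - x)%R)%E.
  apply: eq_integral => x _; under eq_fun do rewrite consB.
  apply: (IH (fun v => phi (col_mx (const_mx (c 0 0 - x) : 'cV[R]_1) v))) => [|z].
    exact: measurableT_comp mphi (measurable_cons_cst _ _).
  exact: phi0.
apply: integral_reflect => [|y]; last exact: iint_ge0.
apply: (measurable_iint (fun q : R * borel_cV k =>
  phi (col_mx (const_mx q.1 : 'cV[R]_1) q.2))).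
  exact: measurableT_comp mphi (measurable_cons_cV k).
by move=> z; exact: phi0.
Qed.

Lemma iint_shear {m d} (L : 'M[R]_(m, d)) (h : borel_cV (m + d) -> \bar R) :
  measurable_fun setT h -> (forall z, (0 <= h z)%E) ->
  iint (fun u : 'cV[R]_(m + d) => h (col_mx (L *m dsubmx u - usubmx u) (dsubmx u))) =
  iint h.
Proof.
move=> mh h0; rewrite iint_col_mx [RHS]iint_col_mx.
under eq_fun do under eq_fun do rewrite col_mxKu col_mxKd.
have mh2 : measurable_fun setT (fun p : borel_cV m * borel_cV d => h (col_mx p.1 p.2)).
  exact: measurableT_comp mh (measurable_col_mx m d).
have mshear : measurable_fun setT
    (fun p : borel_cV m * borel_cV d => ((L *m p.2 - p.1 : borel_cV m), p.2)).
  apply: measurable_fun_pair; last exact: measurable_snd.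
  exact: measurable_submx (measurable_mulmx L measurable_snd) measurable_fst.
rewrite (iint_swap (fun p => h (col_mx (L *m p.2 - p.1) p.2))) => [||z]; last 2 first.
- exact: measurableT_comp mh2 mshear.
- exact: h0.
rewrite (iint_swap (fun p => h (col_mx p.1 p.2))) => [||z] //.
congr iint; apply/funext => b.
have mb : measurable_fun setT (fun a : borel_cV m => (a, (b : borel_cV d))).
  by apply: measurable_fun_pair; [exact: measurable_id | exact: measurable_cst].
exact: (iint_reflect (fun a : borel_cV m => h (col_mx a b)) (L *m b)
  (measurableT_comp mh2 mb) (fun _ => h0 _)).
Qed.

End iterated_integral.

Section positive_definite.
Context {R : realType}.

Lemma invmx_left n (A B : 'M[R]_n) : B *m A = 1%:M -> invmx A = B.
Proof.
move=> BA; have [_ uA] := mulmx1_unit BA.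
by rewrite -[invmx A]mul1mx -BA mulmxK.
Qed.

Lemma posdef_unitmx k (A : 'M[R]_k) : posdef A -> A \in unitmx.
Proof.
move=> [_ hA]; rewrite unitmxE unitfE; apply/negP => /det0P [v v0 vA].
have := hA v^T; rewrite trmx_eq0 => /(_ v0).
by rewrite trmxK vA mul0mx mxE ltxx.
Qed.

Lemma posdef_diag_gt0 k (A : 'M[R]_k) i : posdef A -> 0 < A i i.
Proof.
move=> [_ hA]; have nz : delta_mx i 0 != 0 :> 'cV[R]_k.
  apply/negP => /eqP /matrixP /(_ i 0); rewrite !mxE !eqxx /= => /eqP.
  by rewrite oner_eq0.
by have := hA _ nz; rewrite trmx_delta -rowE -colE !mxE.
Qed.

Lemma posdef_quad_ge0 k (A : 'M[R]_k) (x : 'cV[R]_k) :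
  posdef A -> 0 <= (x^T *m A *m x) 0 0.
Proof.
move=> [_ hA]; have [->|nz] := eqVneq x 0; first by rewrite mulmx0 mxE.
exact/ltW/hA.
Qed.

Section scale_matrix.
Context {d : nat} {Omega : 'M[R]_d}.
Hypothesis hOmega : posdef Omega.

Let omega := omega_mx Omega.

Lemma omega_mx_unitmx : omega \in unitmx.
Proof.
rewrite unitmxE /omega /omega_mx det_diag unitfE.
apply/lt0r_neq0/prodr_gt0 => i _.
by rewrite mxE sqrtr_gt0 posdef_diag_gt0.
Qed.

Lemma tr_omega_mx : omega^T = omega.
Proof. exact: tr_diag_mx. Qed.

Lemma Omega_bar_unitmx : Omega_bar Omega \in unitmx.
Proof.
by rewrite !unitmx_mul unitmx_inv omega_mx_unitmx posdef_unitmx.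
Qed.

Lemma tr_Omega_bar : (Omega_bar Omega)^T = Omega_bar Omega.
Proof. by rewrite !trmx_mul !trmx_inv tr_omega_mx hOmega.1 mulmxA. Qed.

Lemma invmx_Omega_bar : invmx (Omega_bar Omega) = omega *m invmx Omega *m omega.
Proof.
apply: invmx_left; have uw := omega_mx_unitmx.
rewrite /Omega_bar !mulmxA mulmxK // -[_ *m invmx Omega *m Omega]mulmxA.
by rewrite mulVmx ?posdef_unitmx // mulmx1 mulmxV.
Qed.

Lemma quad_Omega_bar_ge0 (b : 'cV[R]_d) :
  0 <= (b^T *m invmx (Omega_bar Omega) *m b) 0 0.
Proof.
set z := invmx Omega *m (omega *m b).
suff -> : b^T *m invmx (Omega_bar Omega) *m b = z^T *m Omega *m z.
  exact: posdef_quad_ge0.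
rewrite invmx_Omega_bar /z !trmx_mul trmx_inv hOmega.1 tr_omega_mx !mulmxA.
by rewrite -[_ *m invmx Omega *m Omega]mulmxA mulVmx ?posdef_unitmx // mulmx1.
Qed.

Lemma quad_scale_shift (xi b : 'cV[R]_d) :
  ((xi + omega *m b - xi)^T *m invmx Omega *m (xi + omega *m b - xi)) 0 0
  = (b^T *m invmx (Omega_bar Omega) *m b) 0 0.
Proof. by rewrite addrC addKr invmx_Omega_bar trmx_mul tr_omega_mx !mulmxA. Qed.

End scale_matrix.
End positive_definite.

Section shear.
Context {R : realType} {d m : nat}.
Variables (Omega : 'M[R]_d) (Delta : 'M[R]_(d, m)) (Gamma_bar : 'M[R]_m).
Hypothesis hOmega : posdef Omega.
Hypothesis hstar : posdef (Omega_star Omega Delta Gamma_bar).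

Let Omega_s := Omega_star Omega Delta Gamma_bar.

Definition Lambda : 'M[R]_(m, d) := Delta^T *m invmx (Omega_bar Omega).

Definition Omega_star_diag : 'M[R]_(m + d) :=
  block_mx (Gamma_bar - Delta^T *m invmx (Omega_bar Omega) *m Delta) 0
           0 (Omega_bar Omega).

Definition shear_mx : 'M[R]_(m + d) := block_mx (- 1%:M) Lambda 0 1%:M.

Lemma shear_mxK : shear_mx *m shear_mx = 1%:M.
Proof.
rewrite mulmx_block !mulmxN !mulNmx !mulmx1 !mul1mx !mulmx0 !mul0mx.
by rewrite opprK !addr0 add0r addNr oppr0 -scalar_mx_block.
Qed.

Lemma tr_shear_mxK : shear_mx^T *m shear_mx^T = 1%:M.
Proof. by rewrite -trmx_mul shear_mxK trmx1. Qed.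

Lemma shear_mx_col (u : 'cV[R]_(m + d)) :
  shear_mx *m u = col_mx (Lambda *m dsubmx u - usubmx u) (dsubmx u).
Proof.
rewrite -{1}(vsubmxK u) mul_block_col mulNmx !mul1mx mul0mx add0r.
by rewrite addrC.
Qed.

Lemma shear_Omega_star : shear_mx *m Omega_s *m shear_mx^T = Omega_star_diag.
Proof.
have uOb := Omega_bar_unitmx hOmega.
have LOb : Lambda *m Omega_bar Omega = Delta^T by rewrite -mulmxA mulVmx ?mulmx1.
have trL : Lambda^T = invmx (Omega_bar Omega) *m Delta.
  by rewrite trmx_mul trmxK trmx_inv tr_Omega_bar.
have -> : shear_mx^T = block_mx (- 1%:M) 0 Lambda^T 1%:M.
  rewrite tr_block_mx trmx0 trmx1; congr block_mx.
  by apply/matrixP => i j; rewrite !mxE eq_sym.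
rewrite /Omega_s /Omega_star mulmx_block !mulNmx !mul1mx !mul0mx !add0r LOb addNr.
rewrite mulmx_block !mulmxN !mulmx1 !mulmx0 !addr0 !mul0mx !addr0.
rewrite trL mulmxA mulmxV // mul1mx addNr add0r opprD opprK.
by rewrite /Omega_star_diag addrC.
Qed.

Lemma Omega_star_shear : Omega_s = shear_mx *m Omega_star_diag *m shear_mx^T.
Proof.
by rewrite -shear_Omega_star !mulmxA shear_mxK mul1mx -mulmxA tr_shear_mxK mulmx1.
Qed.

Lemma invmx_Omega_star :
  invmx Omega_s = shear_mx^T *m invmx Omega_star_diag *m shear_mx.
Proof.
have [uS _] := mulmx1_unit shear_mxK.
have uD : Omega_star_diag \in unitmx.
  by rewrite -shear_Omega_star !unitmx_mul unitmx_tr uS posdef_unitmx.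
apply: invmx_left; rewrite Omega_star_shear !mulmxA.
rewrite -[_ *m shear_mx *m shear_mx]mulmxA shear_mxK mulmx1 mulmxKV //.
exact: tr_shear_mxK.
Qed.

Lemma det_Omega_star : \det Omega_s = \det Omega_star_diag.
Proof.
have det_shear : \det shear_mx = (- 1) ^+ m.
  by rewrite det_ublock det1 mulr1 -raddfN det_scalar.
rewrite Omega_star_shear !det_mulmx det_tr det_shear mulrC mulrA.
by rewrite -exprMn mulrNN mulr1 expr1n mul1r.
Qed.

Lemma t_density_shear (nu : R) (u : 'cV[R]_(m + d)) :
  t_density 0 Omega_s nu u = t_density 0 Omega_star_diag nu (shear_mx *m u).
Proof. by rewrite /t_density det_Omega_star !subr0 invmx_Omega_star trmx_mul !mulmxA. Qed.

End shear.

Section restricted_density.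
Variable R : realType.
Local Notation leb := (@lebesgue_measure R).
Local Open Scope ereal_scope.

Lemma integrable_of_setwise_finite (k : R -> R) (B : set R) :
  measurable_fun setT k -> measurable B ->
  (forall D, measurable D -> 0 <= \int[leb]_(v in D) (k v)%:E) ->
  (forall D, measurable D -> \int[leb]_(v in D) (k v)%:E < +oo) ->
  leb.-integrable B (EFin \o k).
Proof.
move=> mk mB k_ge0 k_fin; apply/integrableP; split.
  exact/measurable_EFinP/measurable_funTS.
pose N := [set v | (k v < 0)%R].
have mN : measurable N.
  rewrite (_ : N = k @^-1` `]-oo, 0%R[); last first.
    by apply/seteqP; split => v /=; rewrite in_itv.
  by rewrite -[X in measurable X]setTI; exact: mk.
rewrite -(setUIDK B N) ge0_integral_setU //; first last.
- by apply/disj_setPS => v [[_ h1] [_ h2]].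
- exact/measurable_funTS/measurableT_comp/measurable_EFinP.
- exact: measurableD.
- exact: measurableI.
apply: lte_add_pinfty.
  have -> : \int[leb]_(v in B `&` N) `|(k v)%:E| = \int[leb]_(v in B `&` N) (- k v)%:E.
    by apply: eq_integral => v; rewrite inE => -[_ Nv]; rewrite abse_EFin ltr0_norm.
  rewrite (@le_lt_trans _ _ 0) // -oppe_ge0 -integral_ge0N => [|v [_ Nv]].
    by under eq_integral do rewrite -EFinN opprK; exact/k_ge0/measurableI.
  by rewrite lee_fin oppr_ge0 ltW.
have -> : \int[leb]_(v in B `\` N) `|(k v)%:E| = \int[leb]_(v in B `\` N) (k v)%:E.
  apply: eq_integral => v; rewrite inE => -[_ Nv].
  by rewrite abse_EFin ger0_norm // leNgt; apply/negP.
exact/k_fin/measurableD.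
Qed.

Lemma integral_pos_part_div (h : R -> R) (c : R) (B : set R) :
  measurable_fun setT h -> measurable B ->
  (forall D, measurable D -> 0 <= \int[leb]_(v in D) (h v)%:E) ->
  (forall D, measurable D -> \int[leb]_(v in D) (h v)%:E < +oo) ->
  (forall D, measurable D -> \int[leb]_(v in D) (h v)%:E =
                           \int[leb]_(v in D `&` `]0%R, +oo[) (h v)%:E) ->
  ((fine (\int[leb]_(v in B) (h v)%:E) / c)%R)%:E =
   \int[leb]_(v in B) (if (0 < v)%R then (h v / c)%R else 0%R)%:E.
Proof.
move=> mh mB h_ge0 h_fin h_pos.
pose k v := if (0 < v)%R then h v else 0%R.
have mk : measurable_fun setT k.
  have -> : k = (fun v => \1_(`]0%R, +oo[%classic) v * h v)%R.
    apply/funext => v; rewrite /k indicE mem_setE in_itv /= andbT.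
    by case: (0 < v)%R; rewrite ?mul1r ?mul0r.
  by apply: measurable_funM => //; exact: measurable_indic.
have kE D : measurable D -> \int[leb]_(v in D) (k v)%:E =
    \int[leb]_(v in D `&` `]0%R, +oo[) (h v)%:E.
  move=> mD; rewrite integral_mkcond [RHS]integral_mkcond.
  apply: eq_integral => v _; rewrite /patch /k in_setI mem_setE in_itv /= andbT.
  by case: (v \in D); case: (0 < v)%R.
have k_int : leb.-integrable B (EFin \o k).
  have mDpos (D : set R) : measurable D -> measurable (D `&` `]0%R, +oo[).
    by move=> mD; exact: measurableI.
  by apply: integrable_of_setwise_finite => // D mD; rewrite kE //;
    [apply: h_ge0 | apply: h_fin]; exact: mDpos.
have [->|c0] := eqVneq c 0%R.
  by rewrite invr0 mulr0 integral0_eq // => v _; rewrite mulr0 if_same.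
transitivity (\int[leb]_(v in B) ((k v)%:E * (c^-1)%:E)); last first.
  by apply: eq_integral => v _; rewrite /k; case: (0 < v)%R; rewrite ?mul0e.
rewrite integralZr // kE // -h_pos //.
by have := h_fin B mB; have := h_ge0 B mB; case: (\int[leb]_(v in B) _).
Qed.

End restricted_density.

Section null_boundary.
Context {dT : measure_display} {T : measurableType dT} {R : realType}.
Variable P : probability T R.
Local Open Scope ereal_scope.

Lemma density_preimage_set1 (Z : T -> R) (f : R -> R) (x : R) :
  (forall B, measurable B ->
     P (Z @^-1` B) = \int[@lebesgue_measure R]_(v in B) (f v)%:E) ->
  measurable_fun setT f -> P (Z @^-1` [set x]) = 0.
Proof.
move=> lawZ mf; rewrite lawZ //; apply: null_set_integral => //.
  exact/measurable_EFinP/measurable_funTS.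
exact: lebesgue_measure_set1.
Qed.

Lemma measure_setI_preimage_pos (Z : T -> R) (A : set T) (D : set R) :
  measurable A -> measurable_fun setT Z -> (forall t, (0 <= Z t)%R) ->
  P (Z @^-1` [set 0%R]) = 0 -> measurable D ->
  P (A `&` Z @^-1` D) = P (A `&` Z @^-1` (D `&` `]0%R, +oo[)).
Proof.
move=> mA mZ Z_ge0 Z0 mD.
have mpre (E : set R) : measurable E -> measurable (A `&` Z @^-1` E).
  by move=> mE; apply: measurableI => //; rewrite -[X in measurable X]setTI; exact: mZ.
have mDpos : measurable (D `&` `]0%R, +oo[) by exact: measurableI.
set X := A `&` Z @^-1` D; set Y := A `&` Z @^-1` (D `&` `]0%R, +oo[).
have YX : Y `<=` X by move=> t [At [Dt _]].
rewrite (measureDI P (mpre _ mD) (mpre _ mDpos)) (setIidr YX).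
rewrite [E in E + _](_ : _ = 0) ?add0e //.
apply/eqP; rewrite eq_le measure_ge0 andbT -Z0 le_measure ?inE //.
- exact: measurableD (mpre _ mD) (mpre _ mDpos).
- by rewrite -[X in measurable X]setTI; exact: mZ.
move=> t [[At Dt] notY] /=; apply/eqP; rewrite eq_le Z_ge0 andbT leNgt.
by apply/negP => Zt_gt0; apply: notY; split; [|split; rewrite //= in_itv /= andbT].
Qed.

End null_boundary.

Section SUT_representation.
Context {R : realType} {d m : nat}.
Context {xi : 'cV[R]_d} {Omega : 'M[R]_d} {Delta : 'M[R]_(d, m)} {tau : 'cV[R]_m}
  {Gamma_bar : 'M[R]_m} {nu : R}.
Hypothesis hOmega : posdef Omega.
Hypothesis hstar : posdef (Omega_star Omega Delta Gamma_bar).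
Hypothesis hnu : 0 < nu.

Let Q_U1 (w : 'cV[R]_(m + d)) :=
  ((dsubmx w)^T *m invmx (Omega_bar Omega) *m dsubmx w) 0 0.
Let trunc (w : 'cV[R]_(m + d)) :=
  forall i, usubmx w i 0 < (Delta^T *m invmx (Omega_bar Omega) *m dsubmx w + tau) i 0.

Lemma measurable_Q_U1 : measurable_fun setT (Q_U1 : borel_cV (m + d) -> R).
Proof. exact: measurable_quad _ measurable_dsubmx. Qed.

Lemma measurable_trunc : measurable [set w : borel_cV (m + d) | trunc w].
Proof.
rewrite (_ : [set w | trunc w] = \bigcap_(i in [set: 'I_m])
    (fun w : borel_cV (m + d) =>
       (Delta^T *m invmx (Omega_bar Omega) *m dsubmx w + tau) i 0 - usubmx w i 0)
    @^-1` `]0%R, +oo[); last first.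
  by apply/seteqP; split => w /= hw i; [move=> _|move: (hw i I)];
    rewrite /= in_itv /= andbT subr_gt0 //; apply.
apply: fin_bigcap_measurable => [|i _]; first exact: finite_finset.
rewrite -[X in measurable X]setTI; apply: measurable_funB => //.
  apply: measurableT_comp (measurable_coord i) _.
  exact: measurable_addmx (measurable_mulmx _ measurable_dsubmx) (measurable_cst _).
exact: measurableT_comp (measurable_coord i) measurable_usubmx.
Qed.

Lemma t_law_shear {dT'} {T' : measurableType dT'} {P' : probability T' R}
    {W : T' -> 'cV[R]_(m + d)} :
  has_t_law P' W 0 (Omega_star_diag Omega Delta Gamma_bar) nu ->
  forall S : set (borel_cV (m + d)), measurable S ->
  iint (fun u => ((\1_[set u | S (shear_mx Omega Delta *m u)] u : R) *
                  t_density 0 (Omega_star Omega Delta Gamma_bar) nu u)%:E)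
  = P' (W @^-1` S).
Proof.
move=> [_ lawW] S mS; rewrite (lawW S mS).
pose h (w : borel_cV (m + d)) :=
  ((\1_S w : R) * t_density 0 (Omega_star_diag Omega Delta Gamma_bar) nu w)%:E.
have mh : measurable_fun setT h.
  apply/measurable_EFinP/measurable_funM; first exact: measurable_indic.
  exact: measurable_t_density.
have h_ge0 w : (0 <= h w)%E by rewrite lee_fin mulr_ge0 ?t_density_ge0 // ltW.
apply: eq_trans (iint_shear (Lambda Omega Delta) h mh h_ge0).
congr iint; apply/funext => u.
by rewrite /h -shear_mx_col (t_density_shear _ _ _ hOmega hstar).
Qed.

Lemma SUT_quad_law {dT} {T : measurableType dT} {P : probability T R} {Y : T -> 'cV[R]_d}
    {dT'} {T' : measurableType dT'} {P' : probability T' R} {W : T' -> 'cV[R]_(m + d)} :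
  has_SUT_law P Y xi Omega Delta tau Gamma_bar nu ->
  has_t_law P' W 0 (Omega_star_diag Omega Delta Gamma_bar) nu ->
  forall B : set R, measurable B ->
  P ((fun t => ((Y t - xi)^T *m invmx Omega *m (Y t - xi)) 0 0) @^-1` B) =
  (fine (P' ([set t | trunc (W t)] `&` (fun t => Q_U1 (W t)) @^-1` B)) /
   fine (P' [set t | trunc (W t)]))%:E.
Proof.
move=> [_ lawY] lawW B mB.
pose BY := [set y : borel_cV d | B (((y - xi)^T *m invmx Omega *m (y - xi)) 0 0)].
have mBY : mxBorel BY.
  have mq : measurable_fun setT
      (fun y : borel_cV d => ((y - xi)^T *m invmx Omega *m (y - xi)) 0 0).
    have mshift : measurable_fun setT (fun y : borel_cV d => (y - xi : borel_cV d)).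
      by apply: measurable_submx; [exact: measurable_id | exact: measurable_cst].
    exact: measurable_quad _ mshift.
  by have := mq measurableT B mB; rewrite setTI.
rewrite [X in P X](_ : _ = Y @^-1` BY) // (lawY BY mBY).
have truncE u : trunc (shear_mx Omega Delta *m u) <-> forall i, 0 < (usubmx u + tau) i 0.
  rewrite /trunc shear_mx_col col_mxKu col_mxKd.
  by split => hu i; move: (hu i); rewrite !mxE; lra.
have QE u :
    (xi + omega_mx Omega *m dsubmx u \in BY) <-> B (Q_U1 (shear_mx Omega Delta *m u)).
  by rewrite in_setE /BY /Q_U1 /= (quad_scale_shift hOmega) shear_mx_col col_mxKd.
pose S := [set w : borel_cV (m + d) | trunc w /\ B (Q_U1 w)].
have mS : measurable S.
  apply: measurableI measurable_trunc _.
  by rewrite -[X in measurable X]setTI; exact: measurable_Q_U1.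
have -> : [set u | forall i, 0 < (usubmx u + tau) i 0] `&`
    [set u | xi + omega_mx Omega *m dsubmx u \in BY] =
    [set u | S (shear_mx Omega Delta *m u)].
  by apply/seteqP; split=> u /= [/truncE ? /QE ?].
have -> : [set u | forall i, 0 < (usubmx u + tau) i 0] =
    [set u | trunc (shear_mx Omega Delta *m u)].
  by apply/seteqP; split=> u /truncE.
by rewrite (t_law_shear lawW _ mS) (t_law_shear lawW _ measurable_trunc).
Qed.
End SUT_representation.
Theorem proposition8 (R : realType) (d m : nat)
    (xi : 'cV[R]_d) (Omega : 'M[R]_d) (Delta : 'M[R]_(d, m))
    (tau : 'cV[R]_m) (Gamma_bar : 'M[R]_m) (nu : R)
    (hOmega : posdef Omega)
    (hGamma_sym : Gamma_bar^T = Gamma_bar)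
    (hGamma_diag : forall i, Gamma_bar i i = 1)
    (hstar : posdef (Omega_star Omega Delta Gamma_bar))
    (hnu : 0 < nu)
    (* Y ~ SUT_{d,m}(xi, Omega, Delta, tau, Gamma_bar, nu) *)
    (dT : measure_display) (T : measurableType dT) (P : probability T R)
    (Y : T -> 'cV[R]_d)
    (hY : has_SUT_law P Y xi Omega Delta tau Gamma_bar nu)
    (* (U0*, U1) ~ T_{m+d}(0, diag(Gamma_bar - Delta^T Omega_bar^-1 Delta, Omega_bar), nu) *)
    (dT' : measure_display) (T' : measurableType dT') (P' : probability T' R)
    (W : T' -> 'cV[R]_(m + d))
    (hW : has_t_law P' W 0
            (block_mx (Gamma_bar - Delta^T *m invmx (Omega_bar Omega) *m Delta) 0
                      0 (Omega_bar Omega)) nu)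
    (* density f_Q of Q_{U1} *)
    (fQ : R -> R) (hfQm : measurable_fun [set: R] fQ) (hfQ0 : forall v, 0 <= fQ v)
    (hfQ : forall B : set R, measurable B ->
        P' ((fun t => ((dsubmx (W t))^T *m invmx (Omega_bar Omega) *m dsubmx (W t)) 0 0)
              @^-1` B)
        = (\int[@lebesgue_measure R]_(v in B) (fQ v)%:E)%E)
    (* g v = P(U0* < Lambda U1 + tau | Q_{U1} = v), a version of the conditional probability *)
    (g : R -> R) (hgm : measurable_fun [set: R] g)
    (hg : forall B : set R, measurable B ->
        P' ([set t | forall i, (usubmx (W t)) i 0 <
               (Delta^T *m invmx (Omega_bar Omega) *m dsubmx (W t) + tau) i 0]
            `&` (fun t => ((dsubmx (W t))^T *m invmx (Omega_bar Omega) *m dsubmx (W t)) 0 0)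
              @^-1` B)
        = (\int[@lebesgue_measure R]_(v in B) (g v * fQ v)%:E)%E) :
  (* Q_Y has density f_{Q_Y}(v) = f_Q(v) g(v) / P(U0* < Lambda U1 + tau) for v > 0 *)
  forall B : set R, measurable B ->
    P ((fun t => ((Y t - xi)^T *m invmx Omega *m (Y t - xi)) 0 0) @^-1` B)
    = (\int[@lebesgue_measure R]_(v in B)
         (if 0 < v then
            fQ v * g v /
              fine (P' [set t | forall i, (usubmx (W t)) i 0 <
                       (Delta^T *m invmx (Omega_bar Omega) *m dsubmx (W t) + tau) i 0])
          else 0)%:E)%E.
Proof.
move=> B mB.
have [rvW _] := hW.
pose Z t := ((dsubmx (W t))^T *m invmx (Omega_bar Omega) *m dsubmx (W t)) 0 0.
pose A := [set t | forall i, (usubmx (W t)) i 0 <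
  (Delta^T *m invmx (Omega_bar Omega) *m dsubmx (W t) + tau) i 0].
have mA : measurable A by exact: rvW _ measurable_trunc.
have mZ : measurable_fun setT Z.
  exact: measurableT_comp measurable_Q_U1 (random_vector_measurable rvW).
have mAZ D : measurable D -> measurable (A `&` Z @^-1` D).
  by move=> mD; apply: measurableI mA _; rewrite -[X in measurable X]setTI; exact: mZ.
rewrite (SUT_quad_law hOmega hstar hnu hY hW _ mB) hg //.
under [in RHS]eq_integral => v _ do rewrite (mulrC (fQ v)).
apply: integral_pos_part_div => // [|D mD|D mD|D mD].
- exact: measurable_funM.
- by rewrite -hg //; exact: measure_ge0.
- by rewrite -hg //; exact: le_lt_trans (probability_le1 _ (mAZ _ mD)) (ltry _).
rewrite -!hg //; last exact: measurableI.
apply: measure_setI_preimage_pos => // [t|]; first exact: quad_Omega_bar_ge0 hOmega _.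
exact: density_preimage_set1 hfQ hfQm.
Qed.
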